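(* Let $n\in\mathbb N$. Then $\delta(n)<\delta(m)$ for every $m\in\mathbb N$ with $m>n$ if and only if $n=k^2$ or $n=k^2+k$ for some $k\in\mathbb N$ (in which case $\delta(n)=2k$, resp. $\delta(n)=2k+1$).
   Context: $\mathbb N$ is the set of positive integers. For $n\in\mathbb N$, $\delta(n)=\min\{\,r+s : r,s\in\mathbb N,\ r\le s,\ rs=n\,\}$, i.e. the minimum of $d+n/d$ over positive divisors $d$ of $n$. *)

From mathcomp Require Import all_boot.
Set Implicit Arguments. Unset Strict Implicit. Unset Printing Implicit Defensive.

(* The pair (1, n) is always admissible for n >= 1, so the default value
   n.+1 of the iterated minimum is never strictly below the true minimum. *)
Definition delta (n : nat) : nat :=
  \big[minn/n.+1]_(r <- divisors n | r <= n %/ r) (r + n %/ r).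

(* By AM-GM every factorisation n = r s has (r + s)^2 >= 4 n, so delta m <= t
   forces m <= t^2/4 (rounded down); conversely t^2/4 = (t/2) (t - t/2) has
   delta equal to t.  Hence the numbers n with delta n < delta m for all m > n
   are exactly the n = t^2/4, i.e. k^2 (t = 2k) and k^2 + k (t = 2k + 1). *)
From mathcomp Require Import all_boot.
From mathcomp Require Import zify.

Lemma bigmin_le_seq (d : nat) (I : eqType) (r : seq I) (P : pred I)
    (F : I -> nat) (x : I) :
  x \in r -> P x -> \big[minn/d]_(y <- r | P y) F y <= F x.
Proof.
elim: r => [|y r IHr] //; rewrite inE big_cons => /predU1P[-> Px|xr Px].
  by rewrite Px geq_minl.
by case: (P y); rewrite ?geq_min IHr ?orbT.
Qed.

Lemma delta_le_sum {n r s} : 0 < n -> r * s = n -> delta n <= r + s.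
Proof.
move=> n_gt0; wlog le_rs : r s / r <= s.
  move=> le_delta rs_n; have [/le_delta -> //|/ltnW le_sr] := leqP r s.
  by rewrite addnC le_delta // mulnC.
move=> rs_n; have r_gt0 : 0 < r by move: n_gt0; rewrite -rs_n muln_gt0 => /andP[].
have n_div_r : n %/ r = s by rewrite -rs_n mulKn.
have r_div : r \in divisors n by rewrite -dvdn_divisors // -rs_n dvdn_mulr.
by rewrite -n_div_r; apply: bigmin_le_seq; rewrite ?n_div_r.
Qed.

Lemma delta_attained {n} : 0 < n -> exists r s, r * s = n /\ delta n = r + s.
Proof.
move=> n_gt0; rewrite /delta big_seq_cond.
apply: (big_ind (fun x => exists r s, r * s = n /\ x = r + s)).
- by exists 1, n; rewrite mul1n add1n.
- by move=> x y rs_x rs_y; case: leqP.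
- move=> r /andP[]; rewrite -dvdn_divisors // => /dvdnP[s n_sr] _.
  have r_gt0 : 0 < r by move: n_gt0; rewrite n_sr muln_gt0 => /andP[].
  by exists r, s; rewrite n_sr mulnK // mulnC.
Qed.

Lemma four_mul_le_delta_sq {n} : 0 < n -> 4 * n <= delta n ^ 2.
Proof. by move=> /delta_attained[r [s [<- ->]]]; apply: nat_AGM2. Qed.

Lemma le_quarter_sq_of_delta_le {m t} : 0 < m -> delta m <= t -> m <= t ^ 2 %/ 4.
Proof.
move=> m_gt0 le_delta; rewrite leq_divRL // mulnC.
by apply: (leq_trans (four_mul_le_delta_sq m_gt0)); rewrite leq_exp2r.
Qed.

Lemma quarter_sq_half t : t ^ 2 %/ 4 = t./2 * (t./2 + odd t).
Proof.
by rewrite -{1}(odd_double_half t) -muln2; case: (odd t); move: t./2 => k /=; lia.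
Qed.

Lemma delta_quarter_sq t : 1 < t -> delta (t ^ 2 %/ 4) = t.
Proof.
move=> t_gt1; have t_k := odd_double_half t; rewrite -muln2 in t_k.
rewrite quarter_sq_half; move: (odd t) (t./2) t_k => b k t_k.
have b_le1 : b <= 1 by apply: leq_b1.
have n_gt0 : 0 < k * (k + b) by nia.
have := four_mul_le_delta_sq n_gt0; have := delta_le_sum n_gt0 erefl.
move: (delta _) => d le_dt sq_d.
apply/eqP; rewrite eqn_leq; apply/andP; split; first by lia.
(* d < t would give d ^ 2 <= (t - 1) ^ 2 < 4 k (k + b) <= d ^ 2. *)
rewrite leqNgt; apply/negP => lt_dt.
have : d * d <= (t - 1) * (t - 1) by apply: leq_mul; lia.
nia.
Qed.

Lemma delta_record_iff n : 0 < n ->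
  (forall m, n < m -> delta n < delta m) <-> n = delta n ^ 2 %/ 4.
Proof.
move=> n_gt0; have le_n := le_quarter_sq_of_delta_le n_gt0 (leqnn _).
have delta_gt1 : 1 < delta n by have := four_mul_le_delta_sq n_gt0; nia.
split=> [record | n_eq m lt_nm].
  apply/eqP; rewrite eqn_leq le_n leqNgt; apply/negP => /record.
  by rewrite delta_quarter_sq // ltnn.
rewrite ltnNge; apply/negP => /(le_quarter_sq_of_delta_le (ltn_trans n_gt0 lt_nm)).
by rewrite -n_eq leqNgt lt_nm.
Qed.

Lemma delta_sq k : 0 < k -> delta (k ^ 2) = 2 * k.
Proof.
by move=> k_gt0; rewrite -[k ^ 2](_ : (2 * k) ^ 2 %/ 4 = _) ?delta_quarter_sq //; lia.
Qed.

Lemma delta_sq_add k : 0 < k -> delta (k ^ 2 + k) = 2 * k + 1.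
Proof.
move=> k_gt0.
by rewrite -[k ^ 2 + k](_ : (2 * k + 1) ^ 2 %/ 4 = _) ?delta_quarter_sq //; lia.
Qed.

Theorem proposition5p4 (n : nat) : 0 < n ->
  ((forall m : nat, n < m -> delta n < delta m) <->
   (exists k : nat, 0 < k /\ (n = k ^ 2 \/ n = k ^ 2 + k)))
  /\ (forall k : nat, 0 < k -> n = k ^ 2 -> delta n = 2 * k)
  /\ (forall k : nat, 0 < k -> n = k ^ 2 + k -> delta n = 2 * k + 1).
Proof.
move=> n_gt0.
split; last by split=> k k_gt0 ->; [apply: delta_sq | apply: delta_sq_add].
rewrite delta_record_iff //; split=> [n_eq | [k [k_gt0 [n_k | n_k]]]].
- move: n_eq; rewrite quarter_sq_half; move: (delta n)./2 (odd _) => k b n_k.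
  exists k; split; first by nia.
  by case: b n_k => ->; [right | left]; nia.
- by rewrite {2}n_k delta_sq // n_k; lia.
- by rewrite {2}n_k delta_sq_add // n_k; lia.
Qed.
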